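(* Let $\Gamma$ be a finite connected $(G,2)$-distance-transitive graph, and suppose $\Gamma\not\cong \mathrm{K}_{m[b]}$ for any $m\ge3$ and $b\ge2$. Let $N$ be a normal subgroup of $G$ maximal with respect to having at least $3$ orbits on $V(\Gamma)$. Then $N$ is semiregular on $V(\Gamma)$, $G/N$ is quasiprimitive or bi-quasiprimitive on $V(\Gamma_N)$, $\Gamma$ is a cover of $\Gamma_N$, and either $\Gamma_N$ is a complete $G/N$-arc-transitive graph or $\Gamma_N$ is a non-complete $(G/N,2)$-distance-transitive graph. Moreover, if $\Gamma$ is $G$-locally-primitive, then $\Gamma_N$ is $G/N$-locally-primitive; and if $\Gamma$ has odd order, then $\Gamma_N$ has odd order.
   Context: For $G\le\mathrm{Aut}(\Gamma)$ and $s\le d(\Gamma)$, $\Gamma$ is $(G,s)$-distance-transitive if $G$ is vertex-transitive and $G_u$ is transitive on $\Gamma_i(u)$ for all $i\le s$ and all vertices $u$. $\mathrm{K}_{m[b]}$ is the complete multipartite graph with $m$ parts of size $b$. $\Gamma_N$ is the quotient graph whose vertices are the $N$-orbits, two orbits adjacent iff some vertices in them are adjacent; $\Gamma$ is a cover of $\Gamma_N$ if for any two adjacent orbits $B,B'$ each vertex of $B$ has exactly one neighbour in $B'$. A transitive group is quasiprimitive if every nontrivial normal subgroup is transitive, and bi-quasiprimitive if every nontrivial normal subgroup has at most two orbits and some one has exactly two. $\Gamma$ is $G$-locally-primitive if $G_u$ is primitive on $\Gamma(u)$ for all $u$; $G$-arc-transitive means $G$ is transitive on arcs. *)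

From mathcomp Require Import all_boot all_order all_fingroup.
Set Implicit Arguments. Unset Strict Implicit. Unset Printing Implicit Defensive.
Import GroupScope.

Section GenericAction.
Variables (T : finType) (aT : finGroupType).
Implicit Types (A : {set aT}) (act : T -> aT -> T) (S W B : {set T}).

Definition gimage act (B : {set T}) (a : aT) : {set T} := [set act x a | x in B].

Definition gorbit A act (x : T) : {set T} := [set act x a | a in A].

Definition gstab A act (x : T) : {set aT} := [set a in A | act x a == x].

Definition transitive_on A act S : Prop :=
  forall x y, x \in S -> y \in S -> exists2 a, a \in A & act x a = y.

Definition norbits A act S : nat := #|[set gorbit A act x | x in S]|.

Definition is_block A act S B : Prop :=
  B \subset S /\ forall a, a \in A -> gimage act B a = B \/ [disjoint gimage act B a & B].

Definition primitive_on A act S : Prop :=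
  transitive_on A act S /\
  forall B, is_block A act S B -> B != set0 -> (#|B| <= 1)%N \/ B = S.

End GenericAction.

Definition quasiprimitive_on (T : finType) (aT : finGroupType) (A : {group aT})
    (act : T -> aT -> T) (S : {set T}) : Prop :=
  transitive_on A act S /\
  forall M : {group aT}, M <| A -> M :!=: 1 -> transitive_on M act S.

Definition biquasiprimitive_on (T : finType) (aT : finGroupType) (A : {group aT})
    (act : T -> aT -> T) (S : {set T}) : Prop :=
  transitive_on A act S /\
  (forall M : {group aT}, M <| A -> M :!=: 1 -> (norbits M act S <= 2)%N) /\
  (exists M : {group aT}, [/\ M <| A, M :!=: 1 & norbits M act S = 2%N]).

Section Graphs.
(* A simple graph with vertex set W (a subset of the finite type T) and
   adjacency relation adj (only its restriction to W matters). *)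
Variables (T : finType) (W : {set T}) (adj : rel T).

Fixpoint walk (n : nat) (x y : T) : bool :=
  if n is n'.+1 then walk n' x y || [exists z in W, walk n' x z && adj z y]
  else x == y.

(* graph distance (equals #|T| if y is unreachable from x) *)
Definition dist (x y : T) : nat := find (fun n => walk n x y) (iota 0 #|T|).

Definition sphere (i : nat) (u : T) : {set T} := [set v in W | dist u v == i].

Definition nbhd (u : T) : {set T} := [set v in W | adj u v].

Definition diameter : nat := \max_(u in W) \max_(v in W) dist u v.

Definition complete_graph : Prop :=
  forall u v, u \in W -> v \in W -> u != v -> adj u v.

Variables (aT : finGroupType) (A : {set aT}) (act : T -> aT -> T).

Definition dist_transitive (s : nat) : Prop :=
  [/\ (s <= diameter)%N,
      transitive_on A act W &
      forall i u, (i <= s)%N -> u \in W -> transitive_on (gstab A act u) act (sphere i u)].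

Definition arc_transitive : Prop :=
  forall u v u' v', u \in W -> v \in W -> u' \in W -> v' \in W ->
    adj u v -> adj u' v' -> exists2 a, a \in A & act u a = u' /\ act v a = v'.

Definition locally_primitive : Prop :=
  forall u, u \in W -> primitive_on (gstab A act u) act (nbhd u).

End Graphs.

Definition is_Kmb (V : finType) (adj : rel V) (m b : nat) : Prop :=
  exists P : {set {set V}},
    [/\ partition P [set: V], #|P| = m, (forall B, B \in P -> #|B| = b) &
        forall x y, adj x y = (pblock P x != pblock P y)].

Definition pact (V : finType) (x : V) (g : {perm V}) : V := g x.

(* the set of N-orbits on V, i.e. the vertex set of Gamma_N *)
Definition norbs (V : finType) (N : {set {perm V}}) : {set {set V}} :=
  [set gorbit N (@pact V) x | x in [set: V]].

(* adjacency of the quotient graph Gamma_N (no loops) *)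
Definition qadj (V : finType) (adj : rel V) : rel {set V} :=
  fun B B' => (B != B') && [exists x in B, exists y in B', adj x y].

(* induced action of G/N on the N-orbits: coset c acts through a representative *)
Definition cact (V : finType) (N : {set {perm V}}) (B : {set V}) (c : coset_of N)
  : {set V} := [set (repr c : {perm V}) x | x in B].

Definition semiregular (V : finType) (N : {set {perm V}}) : Prop :=
  forall x : V, gstab N (@pact V) x = 1.

Definition is_cover (V : finType) (adj : rel V) (N : {set {perm V}}) : Prop :=
  forall B B', B \in norbs N -> B' \in norbs N -> qadj adj B B' ->
    forall x, x \in B -> #|[set y in B' | adj x y]| = 1%N.

From mathcomp Require Import all_boot all_order all_fingroup.
From Stdlib Require Import Classical.
Set Implicit Arguments. Unset Strict Implicit. Unset Printing Implicit Defensive.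

(* Arc-transitivity of G and the presence of at least three N-orbits force
   adjacent vertices into distinct N-orbits.  If a vertex had two neighbours in
   one N-orbit, these would be at distance 2 inside an orbit, so by
   2-distance-transitivity every pair at distance 2 would be; then vertices in
   distinct orbits are adjacent and Γ is the complete multipartite graph on the
   N-orbits.  Hence every vertex has at most one neighbour in each N-orbit: Γ
   covers Γ_N, an element of N fixing a vertex fixes its neighbours and hence
   everything, and Γ(u) maps G_u-equivariantly onto Γ_N(u^N), which transfers
   local primitivity.  Γ_N inherits transitivity on arcs and on pairs at
   distance 2 from Γ, and by maximality of N the preimage in G of a nontrivial
   normal subgroup of G/N has at most two orbits on vertices. *)

Section SmallDistances.
Variables (T : finType) (W : {set T}) (adj : rel T).

Lemma walk1E x y : walk W adj 1 x y = (x == y) || (x \in W) && adj x y.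
Proof.
rewrite /=; congr (_ || _); apply/existsP/idP => [[z /andP[zW /andP[/eqP-> ->]]]|].
  by rewrite zW.
by case/andP=> xW xy; exists x; rewrite xW eqxx xy.
Qed.

Lemma walk2E x y : walk W adj 2 x y =
  [|| x == y, (x \in W) && adj x y | [exists z in W, (x \in W) && adj x z && adj z y]].
Proof.
have -> : walk W adj 2 x y =
  walk W adj 1 x y || [exists z in W, walk W adj 1 x z && adj z y] by [].
rewrite walk1E -orbA.
have [->|nxy] := eqVneq x y; first by [].
case: ((x \in W) && adj x y) / idP => [//|nxy1].
rewrite !orFb; apply: eq_existsb => z; rewrite walk1E.
have [<-|//] := eqVneq x z.
by move: nxy1; case: (x \in W); case: (adj x y); rewrite ?andbF.
Qed.

(* [dist] only searches walks of length below [#|T|], so it is exact on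
   distances up to 2 only when [#|T| > 2]. *)
Hypothesis T_gt2 : 2 < #|T|.

Let distE x y : exists k, dist W adj x y =
  if walk W adj 0 x y then 0 else if walk W adj 1 x y then 1
  else if walk W adj 2 x y then 2 else k.+3.
Proof.
have findE (p : pred nat) k : find p (iota 0 k.+3) =
    if p 0 then 0 else if p 1 then 1 else if p 2 then 2 else (find p (iota 3 k)).+3.
  by rewrite /=; case: (p 0) => //; case: (p 1) => //; case: (p 2).
by rewrite /dist; case: #|T| T_gt2 => [|[|[|k]]] // _; rewrite findE; eexists.
Qed.

Lemma dist_eq0 x y : (dist W adj x y == 0) = (x == y).
Proof. by have [k ->] := distE x y; rewrite /=; case: (x == y); do 2?case: ifP. Qed.

Lemma dist_eq1 x y : (dist W adj x y == 1) = (x != y) && (x \in W) && adj x y.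
Proof.
have [k ->] := distE x y; rewrite walk2E walk1E /=.
by case: (x =P y) => //= _; case: ifP => //= _; case: ifP.
Qed.

Lemma dist_eq2 x y : (dist W adj x y == 2) =
  (x != y) && ~~ ((x \in W) && adj x y) &&
  [exists z in W, (x \in W) && adj x z && adj z y].
Proof.
have [k ->] := distE x y; rewrite walk2E walk1E /=.
case: (x =P y) => [_|nxy] //=.
by case: (_ && _); case: [exists z in W, (x \in W) && adj x z && adj z y].
Qed.

Lemma dist_ge2 x y : x != y -> ~~ ((x \in W) && adj x y) -> 2 <= dist W adj x y.
Proof.
move=> nxy nxy1; have [k ->] := distE x y.
by rewrite walk2E walk1E /= (negbTE nxy) (negbTE nxy1) /=; case: ifP.
Qed.

End SmallDistances.

Lemma leq_dist_diameter (T : finType) (W : {set T}) (adj : rel T) u v :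
  u \in W -> v \in W -> dist W adj u v <= diameter W adj.
Proof.
move=> uW vW; apply: leq_trans (leq_bigmax_cond _ uW).
exact: leq_bigmax_cond vW.
Qed.

Lemma leq_card_imset_coarse (T T1 T2 : finType) (f : T -> T1) (g : T -> T2)
    (A : {pred T}) :
  {in A &, forall x y, g x = g y -> f x = f y} -> #|f @: A| <= #|g @: A|.
Proof.
move=> gf; set P := [set (g x, f x) | x in A].
have -> : f @: A = snd @: P by rewrite -imset_comp.
have -> : g @: A = fst @: P by rewrite -imset_comp.
rewrite [#|fst @: P|]card_in_imset ?leq_imset_card //.
by move=> _ _ /imsetP[x xA ->] /imsetP[y yA ->] /= gxy; rewrite gxy (gf x y).
Qed.

Import GroupScope.

Lemma quasiprimitive_or_biquasiprimitive (T : finType) (aT : finGroupType)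
    (A : {group aT}) (act : T -> aT -> T) (S : {set T}) :
  {in S, forall x, act x 1 = x} -> transitive_on A act S ->
  (forall M : {group aT}, M <| A -> M :!=: 1 -> norbits M act S <= 2) ->
  quasiprimitive_on A act S \/ biquasiprimitive_on A act S.
Proof.
move=> act1 trA le2.
have [bq|nbq] := classic (exists M : {group aT},
  [/\ M <| A, M :!=: 1 & norbits M act S = 2]); first by right.
left; split=> // M nsMA ntM x y xS yS; apply: NNPP => nxy; apply: nbq.
exists M; split=> //; apply/eqP; rewrite eqn_leq le2 //=.
have neq_xy : gorbit M act x != gorbit M act y.
  apply/eqP => exy; apply: nxy.
  have /imsetP[a Ma ->] : y \in gorbit M act x by rewrite exy -{1}(act1 y yS) imset_f.
  by exists a.
apply: leq_trans (subset_leq_card (_ : [set gorbit M act x; gorbit M act y] \subset _)).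
  by rewrite cards2 neq_xy.
by apply/subsetP => B; rewrite !inE => /orP[]/eqP->; apply: imset_f.
Qed.

Section OrbitQuotientAction.
Variables (V : finType) (N : {group {perm V}}).
Local Notation O x := (orbit 'P N x).
Local Notation cact := (@cact V N).

Lemma norbsE (M : {set {perm V}}) : norbs M = [set orbit 'P M x | x in [set: V]].
Proof. by []. Qed.

Lemma mem_norbs x : O x \in norbs N.
Proof. exact: imset_f. Qed.

Lemma norbsP B : reflect (exists x, B = O x) (B \in norbs N).
Proof. by apply: (iffP imsetP) => [[x _ ->]|[x ->]]; exists x. Qed.

Lemma norbs_orbit B x : B \in norbs N -> x \in B -> B = O x.
Proof. by case/norbsP => y -> /orbit_eqP. Qed.

Lemma orbit_perm_in n x : n \in N -> O (n x) = O x.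
Proof. by move=> Nn; apply/orbit_eqP/(mem_orbit 'P). Qed.

Lemma orbit_perm_norm g x y : g \in 'N(N) -> (g y \in O (g x)) = (y \in O x).
Proof. by move=> nNg; have := orbit_conjsg 'P N g x y; rewrite (normP nNg). Qed.

Lemma orbit_perm g x : g \in 'N(N) -> O (g x) = [set g y | y in O x].
Proof.
move=> nNg; apply/setP => z; rewrite -{1}(permKV g z) orbit_perm_norm //.
by rewrite -(mem_imset _ _ (@perm_inj _ g)) permKV.
Qed.

Lemma cact_orbit c x : cact (O x) c = O (repr c x).
Proof. by rewrite /cact orbit_perm ?repr_coset_norm. Qed.

Lemma cact_coset g x : g \in 'N(N) -> cact (O x) (coset N g) = O (g x).
Proof.
move=> nNg; rewrite cact_orbit.
have /rcosetP[n Nn ->] : repr (coset N g) \in N :* g by rewrite -val_coset ?mem_repr_coset.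
by rewrite permM orbit_perm // orbit_perm_in // -orbit_perm.
Qed.

Lemma partition_norbs : partition (norbs N) [set: V].
Proof.
have actsT : [acts N, on [set: V] | 'P].
  by apply/subsetP => a _; rewrite !inE; apply/subsetP => x _; rewrite !inE.
exact: orbit_partition actsT.
Qed.

Lemma pblock_norbs x : pblock (norbs N) x = O x.
Proof.
by case/and3P: partition_norbs => _ tI _; rewrite (def_pblock tI (mem_norbs x)) ?orbit_refl.
Qed.

Lemma cact_norbs B c : B \in norbs N -> cact B c \in norbs N.
Proof. by case/norbsP => x ->; rewrite cact_orbit mem_norbs. Qed.

Lemma cact1 B : cact B 1 = B.
Proof. by rewrite /cact repr_coset1 (eq_imset _ (@perm1 _)) imset_id. Qed.

Lemma cactM B c d : B \in norbs N -> cact (cact B c) d = cact B (c * d).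
Proof.
case/norbsP => x ->; have nNrepr := @repr_coset_norm _ N.
have -> : c * d = coset N (repr c * repr d).
  by rewrite coset_morphM // !coset_reprK.
by rewrite cact_coset ?groupM // permM !cact_orbit.
Qed.

Lemma gorbit_cact (M : {group coset_of N}) B c : B \in norbs N -> c \in M ->
  gorbit M cact (cact B c) = gorbit M cact B.
Proof.
move=> NB Mc; apply/setP => Z; apply/imsetP/imsetP => -[d Md ->].
  by exists (c * d); rewrite ?groupM ?cactM.
by exists (c^-1 * d); rewrite ?groupM ?groupV // cactM ?cact_norbs // mulKVg.
Qed.

Lemma norbits_quotient_le (M : {group coset_of N}) :
  norbits M cact (norbs N) <= #|norbs (coset N @*^-1 M)|.
Proof.
rewrite /norbits !norbsE -imset_comp; apply: leq_card_imset_coarse => x y _ _ /= eqxy.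
have /orbitP[m /morphpreP[nNm Mm] <-] : y \in orbit 'P (coset N @*^-1 M) x.
  by rewrite eqxy orbit_refl.
by rewrite -cact_coset // gorbit_cact ?mem_norbs.
Qed.

Lemma transitive_quotient (G : {group {perm V}}) : G \subset 'N(N) ->
  transitive_on G (@pact V) [set: V] -> transitive_on (G / N) cact (norbs N).
Proof.
move=> nNG trG _ _ /norbsP[x ->] /norbsP[y ->].
have [g Gg <-] := trG x y (in_setT x) (in_setT y).
by exists (coset N g); rewrite ?mem_quotient ?cact_coset ?(subsetP nNG).
Qed.

Lemma card_orbit_transitive (G : {group {perm V}}) x y : G \subset 'N(N) ->
  transitive_on G (@pact V) [set: V] -> #|O x| = #|O y|.
Proof.
move=> nNG trG; have [g Gg <-] := trG x y (in_setT x) (in_setT y).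
by rewrite orbit_perm ?(subsetP nNG) // card_imset //; apply: perm_inj.
Qed.

End OrbitQuotientAction.

Section QuotientGraph.
Variables (V : finType) (adj : rel V) (G N : {group {perm V}}).
Hypotheses (adj_sym : symmetric adj) (adj_irr : irreflexive adj)
  (adjG : forall g x y, g \in G -> adj (g x) (g y) = adj x y)
  (adj_connect : forall x y : V, connect adj x y)
  (dtG : dist_transitive [set: V] adj G (@pact V) 2)
  (nsNG : N <| G) (norbs_ge3 : 3 <= #|norbs N|).

Local Notation O x := (orbit 'P N x).
Local Notation cact := (@cact V N).

Let nNG : G \subset 'N(N) := normal_norm nsNG.

Lemma card_gt2 : 2 < #|V|.
Proof.
apply: leq_trans norbs_ge3 _; rewrite norbsE -cardsT; exact: leq_imset_card.
Qed.

Lemma card_set_gt2 : 2 < #|{set V}|.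
Proof. exact: leq_trans norbs_ge3 (max_card _). Qed.

Lemma transitiveG x y : exists2 g, g \in G & g x = y.
Proof. by case: dtG => _ trG _; apply: trG. Qed.

Definition at_dist2 u v := [&& u != v, ~~ adj u v & [exists z, adj u z && adj z v]].

Lemma sphere1E u v : (v \in sphere [set: V] adj 1 u) = adj u v.
Proof.
rewrite inE dist_eq1 ?card_gt2 // !in_setT andbT.
by have [->|//] := eqVneq u v; rewrite adj_irr.
Qed.

Lemma sphere2E u v : (v \in sphere [set: V] adj 2 u) = at_dist2 u v.
Proof.
rewrite inE dist_eq2 ?card_gt2 // !in_setT /at_dist2 /= andbA; congr (_ && _).
by apply/existsP/existsP => -[z]; rewrite ?in_setT => uzv; exists z; rewrite ?in_setT.
Qed.

Let stab_transitive i u v w : i <= 2 ->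
  v \in sphere [set: V] adj i u -> w \in sphere [set: V] adj i u ->
  exists2 g, g \in G & g u = u /\ g v = w.
Proof.
case: dtG => _ _ dtGu i2 v_i w_i.
have [g /setIdP[Gg /eqP gu] gv] := dtGu i u i2 (in_setT u) v w v_i w_i.
by exists g.
Qed.

Lemma stab_transitive_adj u v w : adj u v -> adj u w ->
  exists2 g, g \in G & g u = u /\ g v = w.
Proof. by rewrite -!sphere1E; apply: stab_transitive. Qed.

Lemma stab_transitive_dist2 u v w : at_dist2 u v -> at_dist2 u w ->
  exists2 g, g \in G & g u = u /\ g v = w.
Proof. by rewrite -!sphere2E; apply: stab_transitive. Qed.

Lemma at_dist2_perm g u v : g \in G -> at_dist2 (g u) (g v) = at_dist2 u v.
Proof.
move=> Gg; rewrite /at_dist2 (inj_eq perm_inj) adjG //; congr [&& _, _ & _].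
apply/existsP/existsP => -[z]; last by exists (g z); rewrite !adjG.
by rewrite -(permKV g z) !adjG //; exists (g^-1 z).
Qed.

Lemma transitive_pairs (R : rel V) :
    (forall g u v, g \in G -> R (g u) (g v) = R u v) ->
    (forall u v w, R u v -> R u w -> exists2 g, g \in G & g u = u /\ g v = w) ->
  forall x y p q, R x y -> R p q -> exists2 g, g \in G & g x = p /\ g y = q.
Proof.
move=> RG stabR x y p q xy pq; have [g Gg gx] := transitiveG x p.
have [h Gh [hp hq]] : exists2 h, h \in G & h p = p /\ h (g y) = q.
  by apply: stabR; rewrite // -gx RG.
by exists (g * h); rewrite ?groupM // !permM gx hp hq.
Qed.

Lemma transitive_arcs x y p q : adj x y -> adj p q ->
  exists2 g, g \in G & g x = p /\ g y = q.
Proof. exact: transitive_pairs adjG stab_transitive_adj x y p q. Qed.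

Lemma mem_orbit_pairs (R : rel V) :
    (forall x y p q, R x y -> R p q -> exists2 g, g \in G & g x = p /\ g y = q) ->
  forall x y p q, R x y -> R p q -> (y \in O x) = (q \in O p).
Proof.
move=> trR x y p q xy pq; have [g Gg [<- <-]] := trR x y p q xy pq.
by rewrite orbit_perm_norm ?(subsetP nNG).
Qed.

Lemma mem_orbit_arc x y p q : adj x y -> adj p q -> (y \in O x) = (q \in O p).
Proof. exact: mem_orbit_pairs transitive_arcs x y p q. Qed.

Lemma mem_orbit_dist2 x y p q : at_dist2 x y -> at_dist2 p q -> (y \in O x) = (q \in O p).
Proof.
exact: mem_orbit_pairs (transitive_pairs at_dist2_perm stab_transitive_dist2) x y p q.
Qed.

Lemma connect_closed_pred (S : pred V) x : x \in S ->
  (forall p q, p \in S -> adj p q -> q \in S) -> forall v, v \in S.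
Proof.
move=> Sx clS v; have clS' : closed adj S.
  by move=> p q pq; apply/idP/idP => [/clS|/clS]; apply; rewrite // adj_sym.
by rewrite -(closed_connect clS' (adj_connect x v)).
Qed.

Lemma norbs_le2 x y : (forall v, (v \in O x) || (v \in O y)) -> #|norbs N| <= 2.
Proof.
move=> xy; apply: leq_trans (_ : #|[set O x; O y]| <= 2); last first.
  by rewrite cards2; case: (_ != _).
apply/subset_leq_card/subsetP => B /norbsP[v ->]; rewrite !inE.
by case/orP: (xy v) => /orbit_eqP ->; rewrite eqxx ?orbT.
Qed.

Lemma adj_orbit_neq x y : adj x y -> O x != O y.
Proof.
move=> xy; apply: contraTneq norbs_ge3 => eqO; rewrite -leqNgt.
have edge_in_orbit p q : adj p q -> q \in O p.
  by move=> pq; rewrite -(mem_orbit_arc xy pq) eqO orbit_refl.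
apply: (@norbs_le2 x x) => v; rewrite orbb.
apply: (connect_closed_pred (orbit_refl 'P N x)) => p q px /edge_in_orbit qp.
exact: orbit_trans qp px.
Qed.

Lemma adj_notin_orbit x y : adj x y -> y \notin O x.
Proof. by move/adj_orbit_neq; apply: contraNN => /orbit_eqP->. Qed.

Lemma adj_orbit_lift x p q : p \in O x -> adj p q -> exists2 q', adj x q' & q \in O q'.
Proof.
case/orbitP => n Nn <- nxq; exists (n^-1 q).
  by rewrite -(adjG _ _ (subsetP (normal_sub nsNG) _ Nn)) permKV.
by rewrite orbit_sym; apply/orbitP; exists n^-1; rewrite ?groupV.
Qed.

Lemma exists_nbr u : exists v, adj u v.
Proof.
have [/existsP//|/existsPn no_nbr] := boolP [exists v, adj u v].
have all_u v : v \in [pred w | w == u].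
  apply: (connect_closed_pred (x := u)) => [|p q]; rewrite !inE // => /eqP-> uq.
  by move: (no_nbr q); rewrite uq.
have : #|V| <= 1.
  rewrite -(cards1 u) -cardsT subset_leq_card //.
  by apply/subsetP => v _; rewrite inE; apply: all_u.
by rewrite leqNgt (leq_trans _ card_gt2).
Qed.

Lemma nbrs_in_two_orbits u : exists a c, [/\ adj u a, adj u c & O a != O c].
Proof.
have [/existsP[a /existsP[c /and3P[]]]|/existsPn one_orbit_u] :=
  boolP [exists a, exists c, [&& adj u a, adj u c & O a != O c]]; first by exists a, c.
have one_orbit w a c : adj w a -> adj w c -> O a = O c.
  have [g Gg <-] := transitiveG u w; have nNg := subsetP nNG g Gg.
  rewrite -(permKV g a) -(permKV g c) !adjG // !(orbit_perm _ nNg) => ua uc.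
  by move/existsPn: (one_orbit_u (g^-1 a)) => /(_ (g^-1 c)); rewrite ua uc negbK => /eqP->.
have [a ua] := exists_nbr u; suff: #|norbs N| <= 2 by rewrite leqNgt norbs_ge3.
apply: (@norbs_le2 u a); apply: (@connect_closed_pred [pred v | (v \in O u) || (v \in O a)] u).
- by rewrite inE orbit_refl.
- move=> p q; rewrite !inE => /orP[pu|pa] pq.
    have [q' uq' qq'] := adj_orbit_lift pu pq.
    by rewrite (one_orbit _ _ _ ua uq') qq' orbT.
  have [q' aq' qq'] := adj_orbit_lift pa pq.
  by rewrite (one_orbit a u q') ?qq' // adj_sym.
Qed.

Lemma qadj_orbitE x y : qadj adj (O x) (O y) = [exists y', (y' \in O y) && adj x y'].
Proof.
apply/idP/existsP => [/andP[_ /existsP[x' /andP[xx' /existsP[y0 /andP[yy0 x'y0]]]]]|].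
  have [y' xy' y0y'] := adj_orbit_lift xx' x'y0.
  by exists y'; rewrite xy' andbT; apply: orbit_trans yy0; rewrite orbit_sym.
case=> y' /andP[/orbit_eqP Oy' xy']; apply/andP; split.
  by rewrite -Oy' adj_orbit_neq.
by apply/existsP; exists x; rewrite orbit_refl; apply/existsP; exists y'; rewrite -Oy' orbit_refl.
Qed.

Lemma qadj_orbitP u B : B \in norbs N ->
  reflect (exists2 w, adj u w & B = O w) (qadj adj (O u) B).
Proof.
move=> NB; apply: (iffP idP) => [|[w uw ->]]; last first.
  by rewrite qadj_orbitE; apply/existsP; exists w; rewrite orbit_refl.
case/norbsP: NB => b ->; rewrite qadj_orbitE => /existsP[w /andP[bw uw]].
by exists w => //; apply/esym/orbit_eqP.
Qed.

Lemma quotient_stab h u : h \in G -> h u = u -> coset N h \in gstab (G / N) cact (O u).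
Proof. by move=> Gh hu; rewrite inE mem_quotient //= cact_coset ?(subsetP nNG) // hu eqxx. Qed.

Lemma quotient_stab_transitive_adj u B1 B2 : B1 \in norbs N -> B2 \in norbs N ->
  qadj adj (O u) B1 -> qadj adj (O u) B2 ->
  exists2 c, c \in gstab (G / N) cact (O u) & cact B1 c = B2.
Proof.
move=> NB1 NB2 /(qadj_orbitP _ NB1)[w1 uw1 ->] /(qadj_orbitP _ NB2)[w2 uw2 ->].
have [h Gh [hu hw]] := stab_transitive_adj uw1 uw2.
by exists (coset N h); [exact: quotient_stab | rewrite cact_coset ?(subsetP nNG) // hw].
Qed.

Lemma qsphere1E u B : (B \in sphere (norbs N) (qadj adj) 1 (O u)) =
  (B \in norbs N) && qadj adj (O u) B.
Proof.
rewrite inE dist_eq1 ?card_set_gt2 // mem_norbs andbT.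
by case: (boolP (qadj _ _ _)) => [/andP[-> _]|]; rewrite ?andbF.
Qed.

Lemma qsphere2_orbit u B : B \in sphere (norbs N) (qadj adj) 2 (O u) ->
  exists2 w, at_dist2 u w & B = O w.
Proof.
rewrite inE dist_eq2 ?card_set_gt2 // mem_norbs /=.
case/and3P=> NB /andP[uB nuB] /existsP[C /andP[NC /andP[uC CB]]].
have [c uc eC] := qadj_orbitP _ NC uC; rewrite eC in CB.
have [w cw eB] := qadj_orbitP _ NB CB; rewrite eB in uB nuB *.
exists w => //; apply/and3P; split.
- by apply: contraNneq uB => ->.
- by apply: contra nuB => uw; apply/(qadj_orbitP _ (mem_norbs _ _)); exists w.
- by apply/existsP; exists c; rewrite uc cw.
Qed.

Lemma quotient_arc_transitive : arc_transitive (norbs N) (qadj adj) (G / N) cact.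
Proof.
move=> B1 B2 B1' B2' NB1 NB2 NB1' NB2'.
case/norbsP: NB1 => x -> /(qadj_orbitP _ NB2)[y xy ->].
case/norbsP: NB1' => x' -> /(qadj_orbitP _ NB2')[y' xy' ->].
have [g Gg [gx gy]] := transitive_arcs xy xy'.
by exists (coset N g); rewrite ?mem_quotient // !cact_coset ?(subsetP nNG) // gx gy.
Qed.

Lemma quotient_dist_transitive : ~ complete_graph (norbs N) (qadj adj) ->
  dist_transitive (norbs N) (qadj adj) (G / N) cact 2.
Proof.
move=> ncomplete; split.
- have [B [B' [NB NB' BB' nBB']]] : exists B B',
      [/\ B \in norbs N, B' \in norbs N, B != B' & ~~ qadj adj B B'].
    apply: NNPP => none; apply: ncomplete => B B' NB NB' BB'.
    by apply/negPn/negP => nBB'; apply: none; exists B, B'.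
  apply: leq_trans (leq_dist_diameter _ NB NB').
  by apply: dist_ge2; rewrite ?card_set_gt2 // NB.
- by case: dtG => _ trG _; apply: transitive_quotient nNG trG.
move=> i B i2 /norbsP[u ->] B1 B2; case: i i2 => [|[|[|//]]] _.
- rewrite !inE !dist_eq0 ?card_set_gt2 // => /andP[_ /eqP <-] /andP[_ /eqP <-].
  by exists 1; rewrite ?cact1 // inE group1 cact1 eqxx.
- by rewrite !qsphere1E => /andP[NB1 uB1] /andP[NB2 uB2]; apply: quotient_stab_transitive_adj.
move=> /qsphere2_orbit[w1 uw1 ->] /qsphere2_orbit[w2 uw2 ->].
have [h Gh [hu hw]] := stab_transitive_dist2 uw1 uw2.
by exists (coset N h); [exact: quotient_stab | rewrite cact_coset ?(subsetP nNG) // hw].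
Qed.

Lemma qnbhdE u : nbhd (norbs N) (qadj adj) (O u) = [set O w | w in nbhd [set: V] adj u].
Proof.
apply/setP => B; rewrite inE; apply/andP/imsetP => [[NB /(qadj_orbitP _ NB)[w uw ->]]|].
  by exists w; rewrite // inE in_setT.
case=> w /[!inE] /andP[_ uw] ->; split; first exact: mem_norbs.
by apply/(qadj_orbitP _ (mem_norbs _ _)); exists w.
Qed.

Section Dist2WithinOrbits.
Hypothesis dist2_in_orbit : forall p q, at_dist2 p q -> q \in O p.

Lemma adj_of_common_nbr z c d : adj z c -> adj z d -> O c != O d -> adj c d.
Proof.
move=> zc zd Ocd; have [//|ncd] := boolP (adj c d); exfalso.
have cd : c != d by apply: contraNneq Ocd => ->.
suff /orbit_eqP Odc : d \in O c by rewrite Odc eqxx in Ocd.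
by apply/dist2_in_orbit/and3P; split=> //; apply/existsP; exists z; rewrite adj_sym zc zd.
Qed.

Lemma diameter_le2 u v : [|| u == v, adj u v | [exists z, adj u z && adj z v]].
Proof.
(* Otherwise u - z - p - q is a geodesic for some q; a neighbour c of u outside
   O z is then adjacent to z, to p and to q in turn. *)
apply: (@connect_closed_pred [pred v | [|| u == v, adj u v | [exists z, adj u z && adj z v]]] u).
  by rewrite inE eqxx.
move=> p q; rewrite !inE => up pq; apply/negPn/negP; rewrite !negb_or.
case/and3P=> uq nuq /existsPn no_mid.
have {}no_mid z : adj u z -> adj z q -> False by move=> uz zq; move: (no_mid z); rewrite uz zq.
case/or3P: up => [/eqP up|up|/existsP[z /andP[uz zp]]]; first by rewrite up pq in nuq.
  exact: no_mid up pq.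
have /dist2_in_orbit/orbit_eqP Opu : at_dist2 u p.
  apply/and3P; split; first by apply: contraNneq nuq => ->.
    by apply/negP => up; apply: no_mid up pq.
  by apply/existsP; exists z; rewrite uz zp.
have /dist2_in_orbit/orbit_eqP Oqz : at_dist2 z q.
  apply/and3P; split; first by apply: contraNneq nuq => <-.
    by apply/negP => zq; apply: no_mid uz zq.
  by apply/existsP; exists p; rewrite zp pq.
have [c uc Ocz] : exists2 c, adj u c & O c != O z.
  have [a [c [ua uc Oac]]] := nbrs_in_two_orbits u.
  have [Oaz|] := eqVneq (O a) (O z); last by exists a.
  by exists c; rewrite // -Oaz eq_sym.
have zc : adj z c by apply: adj_of_common_nbr uz uc _; rewrite eq_sym.
have cp : adj c p.
  by apply: adj_of_common_nbr zc zp _; rewrite Opu eq_sym adj_orbit_neq.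
have cq : adj c q by apply: adj_of_common_nbr (_ : adj p c) pq _; rewrite 1?adj_sym ?Oqz.
exact: no_mid uc cq.
Qed.

Lemma adj_orbitE u v : adj u v = (O u != O v).
Proof.
apply/idP/idP => [/adj_orbit_neq//|Ouv]; have [//|nuv] := boolP (adj u v).
have /orbit_eqP Ovu : v \in O u.
  apply/dist2_in_orbit/and3P; split=> //; first by apply: contraNneq Ouv => ->.
  by case/or3P: (diameter_le2 u v) => [/eqP uv|uv|//]; [rewrite uv eqxx in Ouv | rewrite uv in nuv].
by rewrite Ovu eqxx in Ouv.
Qed.

Lemma is_Kmb_orbits y : is_Kmb adj #|norbs N| #|O y|.
Proof.
exists (norbs N); split=> //; first exact: partition_norbs.
  case: dtG => _ trG _ B /norbsP[x ->].
  exact: card_orbit_transitive nNG trG.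
by move=> x z; rewrite adj_orbitE !pblock_norbs.
Qed.

End Dist2WithinOrbits.

Hypothesis notK : ~ (exists m b, 3 <= m /\ 2 <= b /\ is_Kmb adj m b).

Lemma nbr_orbit_uniq x y y' : adj x y -> adj x y' -> y' \in O y -> y = y'.
Proof.
move=> xy xy' yy'; have [//|neq] := eqVneq y y'; exfalso; apply: notK.
have d2 : at_dist2 y y'.
  apply/and3P; split=> //; first by apply: contraTN yy' => /adj_notin_orbit.
  by apply/existsP; exists x; rewrite adj_sym xy xy'.
exists #|norbs N|, #|O y|; do !split => //; last first.
  by apply: is_Kmb_orbits => p q pq; rewrite -(mem_orbit_dist2 d2 pq).
apply: leq_trans (_ : #|[set y; y']| <= _); first by rewrite cards2 neq.
by apply/subset_leq_card/subsetP => v; rewrite !inE => /orP[]/eqP->; rewrite ?orbit_refl.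
Qed.

Lemma cover_quotient : is_cover adj N.
Proof.
move=> B B' NB NB' BB' x Bx; rewrite (norbs_orbit NB Bx) in BB'.
have [y xy ->] := qadj_orbitP _ NB' BB'.
suff -> : [set z in O y | adj x z] = [set y] by apply: cards1.
apply/setP => z; rewrite !inE; apply/andP/eqP => [[yz xz]|->]; last by rewrite orbit_refl.
by apply/esym/(nbr_orbit_uniq xy xz).
Qed.

Lemma semiregular_N : semiregular N.
Proof.
move=> x; apply/setP => n; rewrite !inE; apply/andP/eqP => [[Nn /eqP nx]|->]; last first.
  by rewrite group1 /pact perm1.
apply/permP => v; rewrite perm1; apply/eqP.
apply: (@connect_closed_pred [pred v | n v == v] x) => [|p q]; rewrite !inE; first exact/eqP.
move=> /eqP np pq.
have np_q : adj p (n q) by rewrite -{1}np adjG ?(subsetP (normal_sub nsNG)).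
by apply/eqP/esym/(nbr_orbit_uniq pq np_q); apply/orbitP; exists n.
Qed.

Lemma card_orbit_N x : #|O x| = #|N|.
Proof.
rewrite -(card_orbit_stab 'P N x).
suff -> : 'C_N[x | 'P] = 1 by rewrite cards1 muln1.
rewrite -(semiregular_N x); apply/setP => n; rewrite in_setI [in RHS]inE; congr (_ && _).
exact/astab1P/eqP.
Qed.

Lemma odd_norbs : odd #|V| -> odd #|norbs N|.
Proof.
rewrite -cardsT (card_partition (partition_norbs N)) (eq_bigr (fun _ => #|N|)).
  by rewrite sum_nat_const oddM => /andP[].
by move=> B /norbsP[x ->]; apply: card_orbit_N.
Qed.

Lemma gimage_nbhd_preimage u h (X : {set {set V}}) : h \in G -> h u = u ->
    X \subset nbhd (norbs N) (qadj adj) (O u) ->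
  gimage (@pact V) [set w in nbhd [set: V] adj u | O w \in X] h =
    [set w in nbhd [set: V] adj u | O w \in gimage cact X (coset N h)].
Proof.
move=> Gh hu sX; have nNh := subsetP nNG h Gh.
have uh w : adj u (h w) = adj u w by rewrite -{1}hu adjG.
apply/setP => z; rewrite inE; apply/imsetP/andP => [[w /[!inE] /andP[/andP[_ uw] Xw] ->]|].
  by rewrite /pact uh; split=> //; apply/imsetP; exists (O w); rewrite ?cact_coset.
case=> /[!inE] /andP[_ uz] /imsetP[B XB OzB].
have /imsetP[w /[!inE] /andP[_ uw] Bw] : B \in [set O w | w in nbhd [set: V] adj u].
  by rewrite -qnbhdE (subsetP sX).
exists w; first by rewrite !inE uw -Bw XB.
rewrite Bw cact_coset // in OzB.
by rewrite /pact; apply: (nbr_orbit_uniq (x := u)); rewrite ?uh // OzB orbit_refl.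
Qed.

Lemma quotient_locally_primitive : locally_primitive [set: V] adj G (@pact V) ->
  locally_primitive (norbs N) (qadj adj) (G / N) cact.
Proof.
move=> lpG B /norbsP[u ->]; have [_ blocks] := lpG u (in_setT u); split.
  by move=> B1 B2 /[!inE] /andP[NB1 uB1] /andP[NB2 uB2]; apply: quotient_stab_transitive_adj.
move=> X [sX blockX] nX; set Y := [set w in nbhd [set: V] adj u | O w \in X].
have XE : X = [set O w | w in Y].
  apply/setP => C; apply/idP/imsetP => [XC|[w /[!inE] /andP[_ Xw] ->] //].
  have := subsetP sX C XC; rewrite qnbhdE => /imsetP[w uw Cw].
  by exists w; rewrite // inE uw -Cw XC.
have blockY : is_block (gstab G (@pact V) u) (@pact V) (nbhd [set: V] adj u) Y.
  split=> [|h /[!inE] /andP[Gh /eqP hu]]; first by apply/subsetP => w /[!inE] /andP[].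
  rewrite gimage_nbhd_preimage //.
  case: (blockX (coset N h) (quotient_stab Gh hu)) => [->|dX]; [by left | right].
  rewrite -setI_eq0; apply/eqP/setP => w; rewrite !inE.
  by apply/negP => /andP[/andP[_ wX'] /andP[_ wX]]; rewrite (disjointFr dX wX') in wX.
have nY : Y != set0 by apply: contraNneq nX => Y0; rewrite XE Y0 imset0.
case: (blocks Y blockY nY) => [Y1|YE]; [left | right].
  by rewrite XE (leq_trans (leq_imset_card _ _)).
by rewrite XE YE -qnbhdE.
Qed.

Hypothesis maxN : forall M : {group {perm V}},
  M <| G -> N \subset M -> 3 <= #|norbs M| -> M :=: N.

Lemma quotient_normal_norbits_le2 (M : {group coset_of N}) : M <| G / N -> M :!=: 1 ->
  norbits M cact (norbs N) <= 2.
Proof.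
move=> nsM ntM; apply: leq_trans (norbits_quotient_le M) _; rewrite leqNgt.
apply: contra ntM => M'3; have nsM' : coset N @*^-1 M <| G.
  by rewrite -(quotientGK nsNG) cosetpre_normal.
by rewrite -(cosetpreK M) (maxN nsM' (sub_cosetpre M) M'3) trivg_quotient.
Qed.

Lemma quotient_quasiprimitive :
  quasiprimitive_on (G / N) cact (norbs N) \/ biquasiprimitive_on (G / N) cact (norbs N).
Proof.
apply: quasiprimitive_or_biquasiprimitive => [B _||]; first exact: cact1.
  by case: dtG => _ trG _; apply: transitive_quotient nNG trG.
exact: quotient_normal_norbits_le2.
Qed.

End QuotientGraph.

Theorem theorem4p1 (V : finType) (adj : rel V) (G N : {group {perm V}}) :
  symmetric adj -> irreflexive adj ->
  (forall g x y, g \in G -> adj (g x) (g y) = adj x y) ->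
  (forall x y : V, connect adj x y) ->
  dist_transitive [set: V] adj G (@pact V) 2 ->
  ~ (exists m b, 3 <= m /\ 2 <= b /\ is_Kmb adj m b) ->
  N <| G -> 3 <= #|norbs N| ->
  (forall M : {group {perm V}}, M <| G -> N \subset M -> 3 <= #|norbs M| -> M :=: N) ->
  [/\ semiregular N,
      [/\
      quasiprimitive_on (G / N) (@cact V N) (norbs N) \/
        biquasiprimitive_on (G / N) (@cact V N) (norbs N)
      & is_cover adj N],
      (complete_graph (norbs N) (qadj adj) /\
         arc_transitive (norbs N) (qadj adj) (G / N) (@cact V N)) \/
      (~ complete_graph (norbs N) (qadj adj) /\
         dist_transitive (norbs N) (qadj adj) (G / N) (@cact V N) 2),
      (locally_primitive [set: V] adj G (@pact V) ->
         locally_primitive (norbs N) (qadj adj) (G / N) (@cact V N)) &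
      (odd #|V| -> odd #|norbs N|)].
Proof.
move=> adj_sym adj_irr adjG adj_connect dtG notK nsNG norbs_ge3 maxN.
split; first by apply: (semiregular_N (G := G)).
- by split; [apply: (quotient_quasiprimitive dtG) | apply: (cover_quotient (G := G))].
- have [complete|ncomplete] := classic (complete_graph (norbs N) (qadj adj)).
    by left; split=> //; apply: quotient_arc_transitive.
  by right; split=> //; apply: quotient_dist_transitive.
- by apply: quotient_locally_primitive.
- by apply: (odd_norbs (G := G)).
Qed.
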